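(* Let $n\geqslant 3$, let $S$ be a caterpillar species tree with canonical label vector $(s_1,\dots,s_n)$, and let $k_s,k_\ell\in\{1,\dots,n\}$ with $k_s<k_\ell$ and $k_\ell\neq 2$. Let $G$ be the caterpillar gene tree with canonical label vector $(g_1,\dots,g_n)$ given by $g_{k_s}=s_{k_\ell}$, $g_k=s_{k-1}$ for $k_s<k\leqslant k_\ell$, and $g_k=s_k$ for $k\notin\{k_s,\dots,k_\ell\}$ (a forward incrementation of $S$ on the component $k_s,\dots,k_\ell$). Writing $\delta=\delta_{k_s,1}$ (equal to $1$ if $k_s=1$ and $0$ otherwise), the number of coalescent histories for $(G,S)$ equals $$\sum_{c=0}^{\min(k_s-2+\delta,\ n-k_\ell)} D(k_\ell-1+c,\ k_s-2+\delta-c)\; D_{k_\ell-k_s-\delta+2+2c}\big(n-k_\ell-c,\ n-k_s+1-\delta+c\big).$$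
   Context: All trees are binary, rooted, leaf-labeled. A caterpillar tree with $n$ leaves is one in which some internal node is descended from all other internal nodes. Its canonical label vector $(x_1,\dots,x_n)$ has $x_1,x_2$ the labels of the two cherry leaves and, for $3\leqslant i\leqslant n$, $x_i$ the label of the leaf separated from the root by $n-i+1$ edges. Internal nodes are numbered $1,\dots,n-1$ from cherry to root; internal edge $i$ is the edge above node $i$, with an extra edge $n-1$ above the root. A coalescent history for $(G,S)$ is a map $h$ from internal nodes of $G$ to internal edges of $S$ such that (1) every label of a leaf below node $v$ of $G$ labels a leaf of $S$ below edge $h(v)$, and (2) if $v_2$ is descended from $v_1$ in $G$ then $h(v_2)$ is descended from $h(v_1)$ (objects are descended from themselves). Catalan's triangle: $D(a,b)=1$ if $b=0$, $D(a,b)=\binom{a+b}{b}-\binom{a+b}{b-1}$ if $1\leqslant b\leqslant a$, and $D(a,b)=0$ if $b>a$ (the number of monotonic lattice paths from $(0,0)$ to $(a,b)$ with steps $(1,0),(0,1)$ never going above $y=x$). Catalan's trapezoid of order $m\geqslant1$: $D_m(a,b)=\binom{a+b}{b}$ if $0\leqslant b<m$, $D_m(a,b)=\binom{a+b}{b}-\binom{a+b}{b-m}$ if $m\leqslant b\leqslant a+m-1$, and $D_m(a,b)=0$ if $b>a+m-1$ (the number of such paths from $(0,0)$ to $(a,b)$ never going above $y=x+m-1$). *)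

From mathcomp Require Import all_boot.


(* Caterpillar trees with n leaves are encoded by their canonical label vector
   x : nat -> nat, read at indices 1..n (x_1, x_2 cherry labels; x_i for i>=3
   the leaf at distance n-i+1 from the root).
   Internal node v (1 <= v <= n-1, numbered from cherry to root) has as leaf
   descendants exactly x_1, ..., x_{v+1}; node v2 is a descendant of node v1
   iff v2 <= v1.  Internal edge i (1 <= i <= n-1) is the edge above node i
   (edge n-1 being the extra edge above the root); the leaves below edge i
   are x_1, ..., x_{i+1}, and edge i2 is descended from edge i1 iff i2 <= i1. *)

Definition leaves_below (x : nat -> nat) (v : nat) : seq nat :=
  [seq x i | i <- iota 1 v.+1].

(* A coalescent history is a map h from internal nodes of G to internal edges
   of S.  Nodes/edges 1..n-1 are represented by ordinals 'I_(n-1) shifted by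
   one (ordinal j stands for node/edge j+1). *)
Definition is_coal_history (n : nat) (g s : nat -> nat)
    (h : {ffun 'I_n.-1 -> 'I_n.-1}) : bool :=
  [forall v : 'I_n.-1,
      all (fun a => a \in leaves_below s (h v).+1) (leaves_below g v.+1)]
  && [forall v1 : 'I_n.-1, forall v2 : 'I_n.-1,
        (v2 <= v1) ==> (h v2 <= h v1)].

Definition num_coal_histories (n : nat) (g s : nat -> nat) : nat :=
  #|[pred h : {ffun 'I_n.-1 -> 'I_n.-1} | is_coal_history n g s h]|.

Definition Dtri (a b : nat) : nat :=
  if b == 0 then 1
  else if b <= a then 'C(a + b, b) - 'C(a + b, b.-1)
  else 0.

Definition Dtrap (m a b : nat) : nat :=
  if b < m then 'C(a + b, b)
  else if b <= a + m - 1 then 'C(a + b, b) - 'C(a + b, b - m)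
  else 0.

Definition fwd_incr (s : nat -> nat) (ks kl : nat) : nat -> nat :=
  fun k => if k == ks then s kl
           else if (ks < k) && (k <= kl) then s k.-1
           else s k.

From mathcomp Require Import all_boot zify.

(* Number the internal nodes of [G] and the internal edges of [S] from [0], so that node [v]
   lies above [g_1, ..., g_(v+2)] and edge [e] above [s_1, ..., s_(e+2)].  A history [h] is then
   a nondecreasing map with [h v >= v], except that the displaced leaf [s_kl] forces
   [h v >= kl - 2] on the plateau [ks - 2 <= v <= kl - 2]; by monotonicity only the constraint
   at [j0 = ks - 2 = ks + delta - 2] matters.
   Read [h] as a lattice path whose [(v+1)]-th up step has abscissa [h v], and cut it at the
   first [y] with [h y + y >= kl - 2 + j0].  The prefix is a path below the diagonal with
   abscissas at most [kl - 2 + j0 - y], counted by Catalan's triangle; the suffix is a path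
   below a shifted diagonal starting at abscissa [kl - 2 + j0 - y], counted by Catalan's
   trapezoid, which the reflection principle identifies with the binomial formula.  The
   summation index is [c = j0 - y], and suffixes exist only for [c <= n - kl]. *)

Fixpoint all_seqs (L B : nat) : seq (seq nat) :=
  if L is L'.+1 then [seq t :: u | t <- iota 0 B, u <- all_seqs L' B] else [:: [::]].

Lemma mem_all_seqs L B u :
  (u \in all_seqs L B) = (size u == L) && all (fun x => x < B) u.
Proof.
elim: L u => [|L IHL] [|x u] //=.
  by apply/allpairsP => -[[t w] [_ _]].
apply/allpairsP/idP => [[[t w] /= [t_in w_in [-> ->]]] | /andP[size_u /andP[x_lt u_lt]]].
  by move: t_in w_in; rewrite mem_iota add0n IHL /= eqSS => -> /andP[-> ->].
by exists (x, u); rewrite /= mem_iota IHL -eqSS size_u x_lt u_lt.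
Qed.

Lemma all_seqs_uniq L B : uniq (all_seqs L B).
Proof.
elim: L => [|L IHL] //=.
by apply: allpairs_uniq => [||[t u] [t' u'] _ _ [-> ->]] //; apply: iota_uniq.
Qed.

Lemma count_sumE (T : Type) (a : pred T) s : count a s = \sum_(x <- s) a x.
Proof. by rewrite -sum1_count big_mkcond. Qed.

Lemma count_andb_const (T : Type) (b : bool) (a : pred T) s :
  count (fun x => b && a x) s = b * count a s.
Proof. by case: b; rewrite ?mul1n //; elim: s. Qed.

Lemma sum_count_andb (T1 T2 : Type) (S : seq T1) (U : seq T2) (P1 : pred T1) (P2 : pred T2) :
  \sum_(p <- S) count (fun q => P1 p && P2 q) U = count P1 S * count P2 U.
Proof.
rewrite -[count P1 S]sum1_count big_distrl [RHS]big_mkcond /=.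
by apply: eq_bigr => p _; rewrite count_andb_const; case: (P1 p).
Qed.

Lemma count_all_seqsS (P : pred (seq nat)) L B :
  count P (all_seqs L.+1 B) = \sum_(0 <= t < B) count (fun u => P (t :: u)) (all_seqs L B).
Proof.
rewrite count_sumE big_allpairs_dep /index_iota subn0.
by apply: eq_bigr => t _; rewrite count_sumE.
Qed.

Lemma count_all_seqs_cat (P : pred (seq nat)) L1 L2 B :
  count P (all_seqs (L1 + L2) B) =
  \sum_(p <- all_seqs L1 B) count (fun q => P (p ++ q)) (all_seqs L2 B).
Proof.
elim: L1 P => [|L1 IHL] P; first by rewrite big_seq1.
rewrite addSn count_all_seqsS /= big_allpairs_dep /index_iota subn0.
by apply: eq_bigr => t _; rewrite IHL.
Qed.

Lemma count_all_seqs_bounded (P : pred (seq nat)) L B a : a < B ->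
  count (fun u => P u && all (fun z => z <= a) u) (all_seqs L B) = count P (all_seqs L a.+1).
Proof.
elim: L P => [|L IHL] P lt_aB; first by rewrite /= andbT.
rewrite !count_all_seqsS (big_cat_nat _ (n := a.+1)) //= [X in _ + X]big1_seq ?addn0.
  apply: eq_big_nat => t /andP[_]; rewrite ltnS => le_ta; rewrite -(IHL (fun u => P (t :: u))) //.
  by apply: eq_count => u /=; rewrite le_ta.
move=> t /andP[_]; rewrite mem_index_iota => /andP[lt_at _].
by rewrite (eq_count (a2 := pred0)) ?count_pred0 // => u /=; rewrite leqNgt lt_at andbF.
Qed.

Definition graph_seq L B (h : {ffun 'I_L -> 'I_B}) : seq nat := map val (fgraph h).
Arguments graph_seq {L B}.

Lemma size_graph_seq L B (h : {ffun 'I_L -> 'I_B}) : size (graph_seq h) = L.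
Proof. by rewrite size_map size_tuple card_ord. Qed.

Lemma nth_graph_seq L B (h : {ffun 'I_L -> 'I_B}) (i : 'I_L) : nth 0 (graph_seq h) i = h i.
Proof. by rewrite (nth_map (h i)) ?nth_fgraph_ord // size_tuple card_ord. Qed.

Lemma graph_seq_inj L B : injective (@graph_seq L B).
Proof.
move=> h1 h2 eq_h; apply/ffunP => i; apply: val_inj.
by rewrite /= -!nth_graph_seq eq_h.
Qed.

Lemma card_graph_seq L B (P : pred (seq nat)) :
  #|[pred h : {ffun 'I_L -> 'I_B} | P (graph_seq h)]| = count P (all_seqs L B).
Proof.
rewrite cardE /enum_mem size_filter -enumT.
transitivity (count P (map graph_seq (enum {ffun 'I_L -> 'I_B}))); first by rewrite count_map.
apply/permP/uniq_perm; first by rewrite (map_inj_uniq (@graph_seq_inj L B)) enum_uniq.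
  exact: all_seqs_uniq.
move=> u; rewrite mem_all_seqs; apply/mapP/idP => [[h _ ->] | /andP[/eqP size_u /allP u_lt]].
  by rewrite size_graph_seq eqxx all_map; apply/allP => i _ /=.
have lt_uB (i : 'I_L) : nth 0 u i < B by apply: u_lt; rewrite mem_nth // size_u.
exists [ffun i => Ordinal (lt_uB i)]; first by rewrite mem_enum.
apply: (@eq_from_nth _ 0) => [|i]; rewrite ?size_graph_seq // size_u => lt_iL.
by rewrite -[i]/(nat_of_ord (Ordinal lt_iL)) nth_graph_seq ffunE.
Qed.

Fixpoint nondecr_above (lo : nat -> nat) (t : nat) (u : seq nat) : bool :=
  if u is x :: u' then [&& t <= x, lo 0 <= x & nondecr_above (fun i => lo i.+1) x u']
  else true.

Lemma eq_nondecr_above lo1 lo2 t : lo1 =1 lo2 -> nondecr_above lo1 t =1 nondecr_above lo2 t.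
Proof.
move=> eq_lo u; elim: u lo1 lo2 t eq_lo => [//|x u IHu] lo1 lo2 t eq_lo /=.
by rewrite eq_lo (IHu _ (fun i => lo2 i.+1)).
Qed.

Lemma nondecr_aboveP lo t u :
  reflect (forall i, i < size u -> lo i <= nth 0 u i /\ nth 0 (t :: u) i <= nth 0 u i)
          (nondecr_above lo t u).
Proof.
elim: u lo t => [|x u IHu] lo t /=; first by constructor.
apply: (iffP and3P) => [[t_x lo_x /IHu ok_u] [|i] lt_i // | ok]; first exact: ok_u.
have [lo_x t_x] := ok 0 isT.
by split=> //; apply/IHu => i; apply: ok i.+1.
Qed.

Lemma nondecr_above_path {lo t u} : nondecr_above lo t u -> path leq t u.
Proof. by elim: u lo t => [//|x u IHu] lo t /and3P[/= -> _ /IHu]. Qed.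

Lemma nondecr_above_nth_mono {lo t u} i k :
  nondecr_above lo t u -> i <= k < size u -> nth 0 u i <= nth 0 u k.
Proof.
move=> /nondecr_above_path/path_sorted/(sorted_leq_nth leq_trans leqnn 0) mono.
by case/andP=> le_ik lt_k; apply: mono; rewrite ?inE // (leq_ltn_trans le_ik).
Qed.

Lemma nondecr_above_cat lo t p q :
  nondecr_above lo t (p ++ q) =
  nondecr_above lo t p && nondecr_above (fun i => lo (size p + i)) (last t p) q.
Proof. by elim: p lo t => [|x p IHp] lo t //=; rewrite IHp -!andbA. Qed.

Lemma path_all_leq_last {t p} b :
  path leq t p -> t <= b -> all (fun x => x <= b) p = (last t p <= b).
Proof.
elim: p t => [_ _ -> //|x p IHp] t /= /andP[_ path_p] le_tb.
have [le_xb | lt_bx] /= := leqP x b; first exact: IHp.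
have le_x_last : x <= last x p.
  move: (mem_last x p); rewrite inE => /predU1P[-> // |].
  exact: (allP (order_path_min leq_trans path_p)).
by apply/esym/negbTE; rewrite -ltnNge (leq_trans lt_bx le_x_last).
Qed.

Lemma count_nondecr_aboveS lo t b B :
  count (nondecr_above lo t) (all_seqs b.+1 B) =
  \sum_(0 <= v < B) ((t <= v) && (lo 0 <= v)) *
                    count (nondecr_above (fun i => lo i.+1) v) (all_seqs b B).
Proof.
rewrite count_all_seqsS; apply: eq_bigr => v _.
by rewrite -count_andb_const; apply: eq_count => u /=; rewrite andbA.
Qed.

Lemma count_nondecr_above_shift lo t b B d : d <= maxn t (lo 0) ->
  count (nondecr_above lo t) (all_seqs b (B + d)) =
  count (nondecr_above (fun i => lo i - d) (t - d)) (all_seqs b B).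
Proof.
elim: b lo t => [//|b IHb] lo t le_d.
rewrite !count_nondecr_aboveS (big_cat_nat _ (n := d)) //=; last lia.
rewrite big1_seq => [|v]; last first.
  rewrite mem_index_iota => /andP[_ lt_vd].
  by have -> : (t <= v) && (lo 0 <= v) = false by lia.
rewrite add0n -{1}(add0n d) big_addn addnK; apply: eq_bigr => v _.
rewrite IHb /=; last lia.
by rewrite addnK; congr (nat_of_bool _ * _); lia.
Qed.

Lemma count_nondecr_above_eq0 lo d b B : B <= d -> 0 < b ->
  count (nondecr_above lo d) (all_seqs b B) = 0.
Proof.
move=> le_Bd; case: b => [//|b] _.
rewrite count_nondecr_aboveS big1_seq // => v; rewrite mem_index_iota => /andP[_ lt_vB].
by rewrite leqNgt (leq_trans lt_vB le_Bd).
Qed.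

(* A nondecreasing [u] with entries [<= a] is a lattice path to [(a, size u)], [u_i] being the
   abscissa of its [i.+1]-th up step; it stays weakly below [y = x + m - 1] iff
   [i.+2 - m <= u_i] for all [i]. *)
Definition trap_paths m a b := count (nondecr_above (fun i => i.+2 - m) 0) (all_seqs b a.+1).

Lemma trap_pathsS m a b :
  trap_paths m a b.+1 =
  (1 < m) * trap_paths m.-1 a b + (if a is a'.+1 then trap_paths m.+1 a' b.+1 else 0).
Proof.
rewrite /trap_paths count_nondecr_aboveS big_nat_recl //; congr (_ + _).
  have [m_gt1 | m_le1] := ltnP 1 m; last by rewrite (_ : 2 - m <= 0 = false) //; lia.
  rewrite (_ : 2 - m <= 0) ?mul1n; last lia.
  by apply: eq_count; apply: eq_nondecr_above => i; lia.
case: a => [|a]; first by rewrite big_geq.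
rewrite count_nondecr_aboveS; apply: eq_bigr => v _.
rewrite -(addn1 a.+1) count_nondecr_above_shift /=; last lia.
rewrite subn1 /=; congr (nat_of_bool _ * _); first lia.
by apply: eq_count; apply: eq_nondecr_above => i; lia.
Qed.

Lemma trap_paths_eq0 m a b : 0 < m -> a + m <= b -> trap_paths m a b = 0.
Proof.
elim: b a m => [|b IHb] a m m_gt0 le_b; first lia.
elim: a m m_gt0 le_b => [|a IHa] m m_gt0 le_b; rewrite trap_pathsS.
  by case: ltnP => m_gt1; rewrite ?mul0n // IHb //; lia.
rewrite IHa ?addn0 //; last lia.
by case: ltnP => m_gt1; rewrite ?mul0n // IHb //; lia.
Qed.

(* Reflection principle: the paths to [(a, b)] crossing [y = x + m - 1] are in bijection with
   all the paths to [(a + m, b - m)]. *)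
Definition crossing_paths m a b := if m <= b then 'C(a + b, b - m) else 0.

Lemma crossing_pathsS m a b : 1 < m ->
  crossing_paths m a.+1 b.+1 = crossing_paths m.-1 a.+1 b + crossing_paths m.+1 a b.+1.
Proof.
move=> m_gt1; rewrite /crossing_paths ltnS.
have [le_mb | lt_bm] := leqP m b.
  have -> : m <= b.+1 by lia.
  have -> : m.-1 <= b by lia.
  have -> : b.+1 - m = (b - m).+1 by lia.
  have -> : b - m.-1 = (b - m).+1 by lia.
  have -> : a + b.+1 = a.+1 + b by lia.
  by rewrite addnS binS.
have [le_mb1 | lt_b1m] := leqP m b.+1; last by have -> : m.-1 <= b = false by lia.
have -> : m.-1 <= b by lia.
have -> : b.+1 - m = 0 by lia.
by have -> : b - m.-1 = 0 by lia.
Qed.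

Lemma crossing_paths1 a b :
  crossing_paths 1 a.+1 b.+1 + 'C(a + b.+1, b.+1) =
  'C(a.+1 + b.+1, b.+1) + crossing_paths 2 a b.+1.
Proof.
rewrite /crossing_paths subn1 /= (_ : a.+1 + b.+1 = (a + b.+1).+1); last lia.
case: b => [|b]; first by rewrite bin0 binS bin0 addn0 addnC.
have -> : b.+2 - 2 = b by lia.
by rewrite /= !binS; lia.
Qed.

Lemma trap_paths_reflection m a b : 0 < m -> b <= a + m ->
  trap_paths m a b + crossing_paths m a b = 'C(a + b, b).
Proof.
elim: b a m => [|b IHb] a m m_gt0 le_b.
  by rewrite /crossing_paths leqNgt m_gt0 addn0 bin0.
elim: a m m_gt0 le_b => [|a IHa] m m_gt0 le_b; rewrite trap_pathsS.
  have [m_gt1 | m_le1] := ltnP 1 m; last first.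
    have m1 : m = 1 by lia.
    by move: le_b; rewrite m1; case: b {IHb}.
  have IHb' := IHb 0 m.-1 ltac:(lia) ltac:(lia); rewrite add0n binn in IHb'.
  rewrite mul1n addn0 add0n binn -IHb'.
  congr (_ + _); rewrite /crossing_paths !add0n.
  have [le_mb1 | lt_b1m] := leqP m b.+1; last by have -> : (m.-1 <= b) = false by lia.
  have -> : m = b.+1 by lia.
  by rewrite /= !leqnn !subnn !bin0.
have IHa' := IHa m.+1 isT ltac:(lia).
have [m_gt1 | m_le1] := ltnP 1 m.
  have IHb' := IHb a.+1 m.-1 ltac:(lia) ltac:(lia).
  rewrite -addSnnS in IHa'.
  by rewrite mul1n crossing_pathsS // addnS binS; lia.
have m1 : m = 1 by lia.
by move: IHa' (crossing_paths1 a b); rewrite m1 mul0n add0n; lia.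
Qed.

Lemma Dtrap_trap_paths m a b : 0 < m -> Dtrap m a b = trap_paths m a b.
Proof.
move=> m_gt0; rewrite /Dtrap.
have [le_amb | lt_b] := leqP (a + m) b.
  rewrite trap_paths_eq0 // (_ : b < m = false); last lia.
  by have -> : (b <= a + m - 1) = false by lia.
have := trap_paths_reflection m a b m_gt0 (ltnW lt_b); rewrite /crossing_paths.
have [lt_bm | le_mb] := ltnP b m; first by rewrite addn0 => ->.
have -> : b <= a + m - 1 by lia.
lia.
Qed.

Lemma Dtri_Dtrap a b : Dtri a b = Dtrap 1 a b.
Proof. by rewrite /Dtri /Dtrap; case: b => [|b] //=; rewrite ?bin0 // addnK subn1. Qed.

Lemma count_bounded_ballot y a B : a < B ->
  count (fun p => nondecr_above id 0 p && all (fun z => z <= a) p) (all_seqs y B) = Dtri a.+1 y.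
Proof.
move=> lt_aB; rewrite count_all_seqs_bounded // Dtri_Dtrap Dtrap_trap_paths // /trap_paths.
rewrite -(addn1 a.+1) count_nondecr_above_shift //.
by apply: eq_count; apply: eq_nondecr_above => i; lia.
Qed.

Lemma count_nondecr_above_diag y d b B : y <= d < B ->
  count (nondecr_above (fun i => i + y) d) (all_seqs b B) = Dtrap (d - y).+2 (B.-1 - d) b.
Proof.
move=> /andP[le_yd lt_dB]; rewrite Dtrap_trap_paths // /trap_paths.
rewrite {1}(_ : B = (B.-1 - d).+1 + d); last lia.
rewrite count_nondecr_above_shift ?leq_maxl // subnn.
by apply: eq_count; apply: eq_nondecr_above => i; lia.
Qed.

Definition first_passage K y (u : seq nat) :=
  ((y == 0) || (nth 0 u y.-1 + y.-1 < K)) && (K <= nth 0 u y + y).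

(* [u_i + i] strictly increases along a nondecreasing [u], so the indicators telescope. *)
Lemma sum_first_passage {lo t u} K k : nondecr_above lo t u -> k < size u ->
  \sum_(0 <= y < k.+1) first_passage K y u = (K <= nth 0 u k + k).
Proof.
move=> ok_u; elim: k => [|k IHk] lt_k; first by rewrite big_nat1.
rewrite big_nat_recr //= IHk; last lia.
have := nondecr_above_nth_mono k k.+1 ok_u; rewrite leqnSn lt_k => /(_ isT).
by rewrite /first_passage /=; case: leqP => /=; lia.
Qed.

Lemma nondecr_above_first_passage K y p x q : y <= K -> size p = y ->
  nondecr_above id 0 (p ++ x :: q) && first_passage K y (p ++ x :: q) =
  (nondecr_above id 0 p && all (fun z => z <= K - y) p) &&
  nondecr_above (fun i => i + y) (K - y) (x :: q).
Proof.
move=> le_yK size_p; rewrite nondecr_above_cat /first_passage.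
case ok_p: (nondecr_above id 0 p) => //=.
rewrite (path_all_leq_last (K - y) (nondecr_above_path ok_p)) //.
rewrite (eq_nondecr_above (fun i => size p + i.+1) (fun i => i.+1 + y)); last by move=> i; lia.
have -> : nth 0 (p ++ x :: q) y = x by rewrite nth_cat size_p ltnn subnn.
case: (nondecr_above _ x q); rewrite ?andbF //.
case: y le_yK size_p => [|y] le_yK size_p; first by move/size0nil: size_p => -> /=; lia.
have -> : nth 0 (p ++ x :: q) y = last 0 p by rewrite nth_cat size_p ltnSn -nth_last size_p.
rewrite /=; lia.
Qed.

Lemma count_first_passage N B j0 M : j0 < N ->
  count (fun u => nondecr_above id 0 u && (M <= nth 0 u j0)) (all_seqs N B) =
  \sum_(0 <= y < j0.+1)
     count (fun p => nondecr_above id 0 p && all (fun z => z <= M + j0 - y) p) (all_seqs y B) *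
     count (nondecr_above (fun i => i + y) (M + j0 - y)) (all_seqs (N - y) B).
Proof.
move=> lt_j0N; set K := M + j0.
rewrite count_sumE (eq_big_seq (fun u =>
  \sum_(0 <= y < j0.+1) (nondecr_above id 0 u && first_passage K y u : nat))); last first.
  move=> u; rewrite mem_all_seqs => /andP[/eqP size_u _].
  case ok_u: (nondecr_above id 0 u); last by rewrite big1.
  by rewrite (sum_first_passage K j0 ok_u) ?size_u // leq_add2r.
rewrite exchange_big /=; apply: eq_big_nat => y /andP[_ lt_y].
rewrite -count_sumE -(subnKC (_ : y <= N)) ?count_all_seqs_cat -?sum_count_andb; last lia.
apply: eq_big_seq => p; rewrite mem_all_seqs => /andP[/eqP size_p _].
rewrite addKn; apply: eq_in_count => -[|x q] => [|_].
  by rewrite mem_all_seqs => /andP[/eqP /= size_q _]; lia.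
by rewrite nondecr_above_first_passage //; lia.
Qed.

Lemma count_nondecr_above_constrained N j0 M : j0 <= M < N ->
  count (fun u => nondecr_above id 0 u && (M <= nth 0 u j0)) (all_seqs N N) =
  \sum_(0 <= c < (minn j0 (N - M - 1)).+1)
     Dtri (M + c).+1 (j0 - c) * Dtrap (M - j0 + 2 * c).+2 (N - M - 1 - c) (N - j0 + c).
Proof.
move=> /andP[le_j0M lt_MN]; rewrite count_first_passage; last lia.
rewrite big_nat_rev (big_cat_nat _ (n := (minn j0 (N - M - 1)).+1)) //=; last lia.
rewrite [X in _ + X]big1_seq ?addn0 => [|c /=]; last first.
  rewrite mem_index_iota => /andP[lt_c lt_cj0].
  by rewrite count_nondecr_above_eq0 ?muln0 //; lia.
apply: eq_big_nat => c /andP[_ lt_c]; rewrite add0n subSS.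
rewrite count_bounded_ballot ?count_nondecr_above_diag; try lia.
by congr (Dtri _ _ * Dtrap _ _ _); lia.
Qed.

Lemma nondecr_above_graph_seq L B (h : {ffun 'I_L -> 'I_B}) lo :
  nondecr_above lo 0 (graph_seq h) =
  [forall v : 'I_L, lo v <= h v] &&
  [forall v1 : 'I_L, forall v2 : 'I_L, (v2 <= v1) ==> (h v2 <= h v1)].
Proof.
apply/nondecr_aboveP/andP => [ok | [/forallP lo_h /forallP mono_h] i]; last first.
  rewrite size_graph_seq => lt_iL; rewrite -[i]/(nat_of_ord (Ordinal lt_iL)) nth_graph_seq.
  split; first exact: lo_h.
  case: i lt_iL => [|i] lt_iL //=; have lt_i : i < L by lia.
  rewrite -[i]/(nat_of_ord (Ordinal lt_i)) nth_graph_seq.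
  exact: (implyP (forallP (mono_h (Ordinal lt_iL)) (Ordinal lt_i))).
have ok_h : nondecr_above lo 0 (graph_seq h) by apply/nondecr_aboveP.
split; apply/forallP => v; first by have [] := ok v; rewrite ?size_graph_seq ?nth_graph_seq.
apply/forallP => w; apply/implyP => le_wv; rewrite -!nth_graph_seq.
by apply: (nondecr_above_nth_mono w v ok_h); rewrite le_wv size_graph_seq /=.
Qed.

Lemma nondecr_above_plateau j0 j1 M t u : j0 <= j1 <= M -> j0 < size u ->
  nondecr_above (fun i => if j0 <= i <= j1 then M else i) t u =
  nondecr_above id t u && (M <= nth 0 u j0).
Proof.
move=> /andP[le_j01 le_j1M] lt_j0; apply/nondecr_aboveP/andP => [ok | [ok_u le_M] i lt_i].
  split; last by have [] := ok j0 lt_j0; rewrite leqnn le_j01.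
  by apply/nondecr_aboveP => i /ok[]; case: ifP => [/andP[_ le_ij1] le_M | _]; split => //; lia.
have [le_i ->] := nondecr_aboveP _ _ _ ok_u i lt_i; split=> //.
case: ifP => [/andP[le_j0i _] | _] //.
by apply: leq_trans le_M (nondecr_above_nth_mono _ _ ok_u _); rewrite le_j0i.
Qed.

Lemma all_leaves_below {n g s p} v e :
  (forall i j, 1 <= i <= n -> 1 <= j <= n -> s i = s j -> i = j) ->
  g =1 s \o p -> (forall k, 1 <= k <= v.+1 -> 1 <= p k <= n) -> e < n ->
  all (fun a => a \in leaves_below s e) (leaves_below g v) =
  all (fun k => p k <= e.+1) (iota 1 v.+1).
Proof.
move=> s_inj gE p_range lt_en; rewrite all_map; apply: eq_in_all => k.
rewrite mem_iota => k_range; have pk_range := p_range k ltac:(lia).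
rewrite /= gE; apply/mapP/idP => [[i] | le_pk]; last by exists (p k); rewrite // mem_iota; lia.
by rewrite mem_iota => i_range /s_inj-> //; lia.
Qed.

Definition fwd_index ks kl k :=
  if k == ks then kl else if (ks < k) && (k <= kl) then k.-1 else k.

Lemma fwd_incrE s ks kl : fwd_incr s ks kl =1 s \o fwd_index ks kl.
Proof. by move=> k; rewrite /fwd_incr /fwd_index /=; case: ifP => //; case: ifP. Qed.

Lemma all_fwd_index_le ks kl w e : 0 < ks -> ks < kl -> 0 < w ->
  all (fun k => fwd_index ks kl k <= e) (iota 1 w) =
  ((if ks <= w <= kl then kl else w) <= e).
Proof.
move=> ks_gt0 ks_lt_kl w_gt0; apply/allP/idP => [le_e | le_max k].
  case: ifP => w_in.
    by have := le_e ks; rewrite mem_iota /fwd_index eqxx; apply; lia.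
  have := le_e w; rewrite mem_iota /fwd_index => /(_ ltac:(lia)).
  by repeat case: ifP => //; lia.
rewrite mem_iota /fwd_index => k_range; move: le_max.
by repeat case: ifP => //; lia.
Qed.

Lemma coal_history_fwd_incr n s ks kl (h : {ffun 'I_n.-1 -> 'I_n.-1}) :
  (forall i j, 1 <= i <= n -> 1 <= j <= n -> s i = s j -> i = j) ->
  0 < ks -> ks < kl -> kl <= n ->
  is_coal_history n (fwd_incr s ks kl) s h =
  nondecr_above (fun i => if ks - 2 <= i <= kl - 2 then kl - 2 else i) 0 (graph_seq h).
Proof.
move=> s_inj ks_gt0 ks_lt_kl kl_le_n; rewrite nondecr_above_graph_seq /is_coal_history.
congr (_ && _); apply: eq_forallb => v.
have lt_v := ltn_ord v; have lt_hv := ltn_ord (h v).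
rewrite (all_leaves_below _ _ s_inj (fwd_incrE s ks kl)); try lia; last first.
  by move=> k k_range; rewrite /fwd_index; repeat case: ifP => //; lia.
rewrite all_fwd_index_le //; repeat case: ifP => //; lia.
Qed.

Lemma num_coal_histories_fwd_incr n s ks kl :
  (forall i j, 1 <= i <= n -> 1 <= j <= n -> s i = s j -> i = j) ->
  0 < ks -> ks < kl -> kl <= n ->
  num_coal_histories n (fwd_incr s ks kl) s =
  count (fun u => nondecr_above id 0 u && (kl - 2 <= nth 0 u (ks - 2))) (all_seqs n.-1 n.-1).
Proof.
move=> s_inj ks_gt0 ks_lt_kl kl_le_n; rewrite /num_coal_histories.
rewrite (eq_card (B := [pred h | nondecr_above
  (fun i => if ks - 2 <= i <= kl - 2 then kl - 2 else i) 0 (graph_seq h)])); last first.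
  by move=> h; rewrite !inE coal_history_fwd_incr.
rewrite card_graph_seq; apply: eq_in_count => u.
rewrite mem_all_seqs => /andP[/eqP size_u _].
by apply: nondecr_above_plateau; rewrite ?size_u -?subn1; lia.
Qed.

Theorem proposition9 (n : nat) (s : nat -> nat) (ks kl : nat) :
  3 <= n ->
  (forall i j, 1 <= i <= n -> 1 <= j <= n -> s i = s j -> i = j) ->
  1 <= ks -> ks < kl -> kl <= n -> kl != 2 ->
  let delta := (ks == 1 : nat) in
  num_coal_histories n (fwd_incr s ks kl) s =
  \sum_(0 <= c < (minn (ks + delta - 2) (n - kl)).+1)
     Dtri (kl - 1 + c) (ks + delta - 2 - c) *
     Dtrap (kl - ks - delta + 2 + 2 * c) (n - kl - c) (n - ks + 1 - delta + c).
Proof.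
move=> _ s_inj ks_gt0 ks_lt_kl kl_le_n _ delta.
have -> : delta = 2 - ks by rewrite /delta; case: eqP => [->|]; lia.
rewrite num_coal_histories_fwd_incr // count_nondecr_above_constrained; last lia.
have -> : n.-1 - (kl - 2) - 1 = n - kl by lia.
have -> : ks + (2 - ks) - 2 = ks - 2 by lia.
by apply: eq_big_nat => c /andP[_ lt_c]; congr (Dtri _ _ * Dtrap _ _ _); lia.
Qed.
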